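(* Let $\mathcal S$ be a trajectory set with $\mathcal M_0\neq\emptyset$. Then $\bar\sigma(0)\ge0$, and for every financial position $f:\mathcal S\to[-\infty,+\infty]$, $$\sup_{Q\in\mathcal M_0}E_Q^*[f]\le\bar\sigma(f)\le\|f\|.$$ Moreover, for every $Q\in\mathcal M_0$ one has $\mathcal L^1_{(K)}\subseteq\mathcal L^1(\mathcal S,\bar{\mathfrak A}_Q,Q)$ and $\int_{(K)}f=E_Q[f]$ for every $f\in\mathcal L^1_{(K)}$.
   Context: Fix $s_0\in\mathbb R$. A trajectory set is any set $\mathcal S$ of real sequences $S=(S_j)_{j\in\mathbb N_0}$ with $S_0=s_0$. A simple portfolio $(V,n,H)$ consists of $V\in\mathbb R$, $n\in\mathbb N$ and nonanticipating $H_i:\mathcal S\to\mathbb R$, $0\le i\le n-1$ (i.e. $H_i(S)=h_i(S_0,\dots,S_i)$ for arbitrary, not necessarily measurable, $h_i:\mathbb R^{i+1}\to\mathbb R$), with wealth $\Pi^{V,n,H}_j(S)=V+\sum_{i=0}^{\min\{j,n\}-1}H_i(S)(S_{i+1}-S_i)$ and $\Pi^{V,n,H}_\infty:=\Pi^{V,n,H}_n$; positive if $V\ge0$ and $\Pi^{V,n,H}_\infty\ge0$ on $\mathcal S$. A generalized portfolio is a sequence $(V_m,n_m,H_m)_{m\in\mathbb N_0}$ of simple portfolios, positive for $m\ge1$; positive generalized if moreover $\Pi^{V_0,n_0,H_0}_j\equiv0$ for all $j$. It superhedges $f:\mathcal S\to[-\infty,+\infty]$ with initial endowment $\sum_{m=0}^\infty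 V_m$ if $f\le\sum_{m=0}^\infty\Pi^{V_m,n_m,H_m}_\infty$ on $\mathcal S$. For $f\ge0$, $\bar I(f)$ is the infimum of initial endowments of positive generalized portfolios superhedging $f$; $\bar\sigma(f)$ is the infimum of initial endowments of generalized portfolios superhedging $f$; $\|f\|:=\bar I(|f|)$. Let $\mathcal L^1_{(K)}$ be the set of real-valued $f$ with $-\bar\sigma(-f)=\bar\sigma(f)\in\mathbb R$, and $\int_{(K)}f:=\bar\sigma(f)$ for such $f$. Let $\mathfrak A$ be the trace on $\mathcal S$ of the product Borel $\sigma$-field of $\mathbb R^{\mathbb N_0}$, $T_i(S)=S_i$ the coordinate process, and $\mathcal F_i=\sigma(T_0,\dots,T_i)$. A martingale measure is a probability $Q$ on $(\mathcal S,\mathfrak A)$ under which $(T_i)_{i\ge0}$ is a martingale w.r.t. $(\mathcal F_i)$. It has finite support at finite maturities if there is $\mathcal S'\in\mathfrak A$ with $Q(\mathcal S')=1$ such that for every $j\in\mathbb N_0$ the set of nodes $\{\mathcal S_{(S,j)}:S\in\mathcal S'\}$ is finite, where $\mathcal S_{(S,j)}=\{\tilde S\in\mathcal S:(\tilde S_0,\dots,\tilde S_j)=(S_0,\dots,S_j)\}$. $\mathcal M_0$ is the set of such martingale measures. $\bar{\mathfrak A}_Q$ is the $Q$-completion of $\mathfrak A$, $E_Q$ the expectation, and $E_Q^*[f]=\inf\{E_Q[h]: h\ \bar{\mathfrak A}_Q\text{-measurable},\ f\le h\text{ on }\mathcal S,\ E_Q[h]\text{ exists in }[-\infty,+\infty]\}$.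 *)

From HB Require Import structures.
From mathcomp Require Import all_boot all_order all_algebra.
From mathcomp Require Import all_classical all_reals all_analysis.
From mathcomp Require Import measurable_realfun.

Set Implicit Arguments.
Unset Strict Implicit.
Unset Printing Implicit Defensive.

Import Order.TTheory GRing.Theory Num.Theory.
Local Open Scope classical_set_scope.
Local Open Scope ring_scope.

Section Portfolios.
Variable R : realType.

Definition prefix (x : nat -> R) (i : nat) : seq R := [seq x k | k <- iota 0 i.+1].

(* A simple portfolio (V, n, H): V real, n in N = {1,2,...}, and
   H_i(S) = h_i(S_0,...,S_i) for arbitrary h_i : R^{i+1} -> R
   (represented as a function on the list (S_0,...,S_i)). *)
Record sportfolio := SPortfolio {
  pV : R;
  pn : nat;
  pn_gt0 : (0 < pn)%N;
  ph : nat -> seq R -> R }.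

Definition wealth (P : sportfolio) (j : nat) (x : nat -> R) : R :=
  pV P + \sum_(0 <= i < minn j (pn P)) ph P i (prefix x i) * (x i.+1 - x i).

Definition wealth_inf (P : sportfolio) (x : nat -> R) : R := wealth P (pn P) x.

End Portfolios.

(* The elements of the trajectory set S; the extra argument p is a point of S
   (only used to equip the type with the pointed structure required by
   MathComp-Analysis' measurable types). *)
Definition trajT (R : realType) (S : set (nat -> R)) (p : {y | S y}) : Type :=
  {y | S y}.

HB.instance Definition _ (R : realType) (S : set (nat -> R)) (p : {y | S y}) :=
  gen_eqMixin (trajT p).
HB.instance Definition _ (R : realType) (S : set (nat -> R)) (p : {y | S y}) :=
  gen_choiceMixin (trajT p).
HB.instance Definition _ (R : realType) (S : set (nat -> R)) (p : {y | S y}) :=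
  isPointed.Build (trajT p) p.

Definition coord (R : realType) (S : set (nat -> R)) (p : {y | S y})
  (i : nat) (x : trajT p) : R := proj1_sig x i.
Arguments coord {R S} p i x.

(* generators: sets T_i^{-1}(B), B Borel.  The generated sigma-algebra
   sigma(T_i, i in N_0) is the trace on S of the product Borel sigma-field. *)
Definition coord_gen (R : realType) (S : set (nat -> R)) (p : {y | S y})
  : set (set (trajT p)) :=
  [set A | exists i (B : set R), measurable B /\ A = coord p i @^-1` B].
Arguments coord_gen {R S} p.

Definition Traj (R : realType) (S : set (nat -> R)) (p : {y | S y}) :=
  g_sigma_algebraType (coord_gen p).
Arguments Traj {R S} p.

Definition filtr (R : realType) (S : set (nat -> R)) (p : {y | S y}) (i : nat)
  : set (set (Traj p)) :=
  <<s [set A | exists j (B : set R),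
          (j <= i)%N /\ measurable B /\ A = coord p j @^-1` B] >>.
Arguments filtr {R S} p i.

Section Completion.
Local Open Scope ereal_scope.
Context d (U : measurableType d) (R : realType) (mu : measure U R).
Local Notation I := (caratheodory_type (mu^*)%mu).
Local Notation mub := (completed_measure_extension (mu:=mu)).

Definition cmeasurable (h : U -> \bar R) : Prop :=
  measurable_fun [set: I] (h : I -> \bar R).

Definition cexpect (h : U -> \bar R) : \bar R := \int[mub]_x ((h : I -> \bar R) x).

Definition cexpect_exists (h : U -> \bar R) : Prop :=
  ~ (\int[mub]_x ((h : I -> \bar R)^\+ x) = +oo /\
     \int[mub]_x ((h : I -> \bar R)^\- x) = +oo).

Definition cintegrable (h : U -> \bar R) : Prop :=
  mub.-integrable [set: I] (h : I -> \bar R).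
End Completion.

Section Hedging.
Local Open Scope ereal_scope.
Variables (R : realType) (S : set (nat -> R)) (p : {y | S y}).
Notation T := (Traj p).

Definition positive_sp (P : sportfolio R) : Prop :=
  (0 <= pV P)%R /\ forall x : T, (0 <= wealth_inf P (proj1_sig x))%R.

Definition gen_portfolio (P : nat -> sportfolio R) : Prop :=
  forall m, (0 < m)%N -> positive_sp (P m).

Definition pos_gen_portfolio (P : nat -> sportfolio R) : Prop :=
  gen_portfolio P /\ forall j (x : T), wealth (P 0%N) j (proj1_sig x) = 0%R.

Definition endowment (P : nat -> sportfolio R) : \bar R :=
  \sum_(m <oo) (pV (P m))%:E.

Definition superhedges (P : nat -> sportfolio R) (f : T -> \bar R) : Prop :=
  forall x : T, f x <= \sum_(m <oo) (wealth_inf (P m) (proj1_sig x))%:E.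

Definition Ibar (f : T -> \bar R) : \bar R :=
  ereal_inf [set e | exists P, pos_gen_portfolio P /\ superhedges P f
                              /\ e = endowment P].

Definition sigmabar (f : T -> \bar R) : \bar R :=
  ereal_inf [set e | exists P, gen_portfolio P /\ superhedges P f
                              /\ e = endowment P].

Definition knorm (f : T -> \bar R) : \bar R := Ibar (fun x => `|f x|).

Definition L1K : set (T -> R) :=
  [set f | - sigmabar (fun x => (- f x)%:E) = sigmabar (fun x => (f x)%:E)
           /\ sigmabar (fun x => (f x)%:E) \is a fin_num].

Definition intK (f : T -> R) : \bar R := sigmabar (fun x => (f x)%:E).

Definition martingale_measure (Q : probability T R) : Prop :=
  forall i : nat,
    Q.-integrable setT (fun x : T => (coord p i x)%:E) /\
    forall A, filtr p i A ->
      \int[Q]_(x in A) (coord p i.+1 x)%:E = \int[Q]_(x in A) (coord p i x)%:E.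

Definition node (j : nat) (x : T) : set T :=
  [set y : T | forall k, (k <= j)%N -> proj1_sig y k = proj1_sig x k].

Definition finite_support (Q : probability T R) : Prop :=
  exists S' : set T, measurable S' /\ Q S' = 1 /\
    forall j : nat, finite_set [set node j x | x in S'].

Definition M0 : set (probability T R) :=
  [set Q | martingale_measure Q /\ finite_support Q].

(* completion (S, \bar{\mathfrak A}_Q, Q): MathComp-Analysis' completed
   measure extension of Q (Caratheodory sigma-algebra of the outer measure
   mu_ext Q), see section Completion below. *)
Definition Abar_measurable (Q : probability T R) (h : T -> \bar R) : Prop :=
  cmeasurable Q h.
Definition EQ (Q : probability T R) (h : T -> \bar R) : \bar R :=
  cexpect Q h.
Definition EQ_exists (Q : probability T R) (h : T -> \bar R) : Prop :=
  cexpect_exists Q h.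

Definition EQstar (Q : probability T R) (f : T -> \bar R) : \bar R :=
  ereal_inf [set EQ Q h | h in [set h | Abar_measurable Q h /\
                                  (forall x, f x <= h x) /\ EQ_exists Q h]].

Definition L1Q (Q : probability T R) (f : T -> R) : Prop :=
  cintegrable Q (fun x => (f x)%:E).

End Hedging.

Arguments Ibar {R S} p f.
Arguments sigmabar {R S} p f.
Arguments knorm {R S} p f.
Arguments L1K {R S} p.
Arguments intK {R S} p f.
Arguments M0 {R S} p.
Arguments EQstar {R S p} Q f.
Arguments EQ {R S p} Q h.
Arguments L1Q {R S p} Q f.

(* Fix Q in M_0 and a set S' of full Q-measure with finitely many nodes at
   each date.  On S' the position H_i depends on one of finitely many prefixes
   (S_0, ..., S_i), so the gain H_i (S_(i+1) - S_i) restricted to S' is a finite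
   sum of martingale increments over F_i-atoms: it is Q-integrable with zero
   mean.  For a generalized portfolio superhedging f, the function equal to
   the total wealth on S' and to +oo off S' is therefore an integrable majorant
   of f whose integral is the initial endowment (monotone convergence handles
   the positive portfolios), whence E_Q^*[f] <= sigma(f).
   If f is in L^1_(K) with sigma(f) = c = - sigma(-f), infima of almost optimal
   majorants give integrable H >= f and K >= -f with E_Q[H] <= c and
   E_Q[K] <= -c; then H + K >= 0 has integral <= 0, so H = f Q-a.s., f is
   integrable for the completion of Q and E_Q[f] = c. *)

From Pilot Require Import Defs.
From HB Require Import structures.
From mathcomp Require Import all_boot all_order all_algebra.
From mathcomp Require Import all_classical all_reals all_analysis.
From mathcomp Require Import measurable_realfun.
From mathcomp Require Import lra.

Set Implicit Arguments.
Unset Strict Implicit.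
Unset Printing Implicit Defensive.

Import Order.TTheory GRing.Theory Num.Theory.
Local Open Scope classical_set_scope.
Local Open Scope ring_scope.
Local Open Scope ereal_scope.

Lemma eseries_recl (R : realType) (u : nat -> \bar R) :
  u 0%N \is a fin_num -> (forall k, 0 <= u k.+1) ->
  \sum_(m <oo) u m = u 0%N + \sum_(k <oo) u k.+1.
Proof.
move=> u0 u_ge0; apply: cvg_lim => //; rewrite -cvg_shiftS /=.
under eq_fun do rewrite big_nat_recl //.
apply: cvgeD; [exact: fin_num_adde_defr | exact: cvg_cst |].
by apply: is_cvg_nneseries => n _ _; exact: u_ge0.
Qed.

Lemma abse_le_between (R : realType) (a x b : \bar R) :
  a <= x -> x <= b -> `|x| <= `|a| + `|b|.
Proof.
case: x => [x| |]; case: a => [a| |]; case: b => [b| |] //=;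
  rewrite ?lee_fin ?leey ?addey ?addye // => ax xb.
rewrite ler_norml; apply/andP; split.
  by have := ler_norm (- a); rewrite normrN; have := normr_ge0 b; lra.
by have := ler_norm b; have := normr_ge0 a; lra.
Qed.

Lemma lee_addinvS (R : realType) (a b : \bar R) :
  (forall n, a <= b + (n.+1%:R^-1)%:E) -> a <= b.
Proof.
move=> ab; apply/lee_addgt0Pr => e e0.
have [N _ /(_ N (leqnn N)) /ltW Ne] := near_infty_natSinv_lt (PosNum e0).
by apply: le_trans (ab N) _; rewrite leeD2l.
Qed.

Section integration.
Context d (T : measurableType d) (R : realType) (mu : {measure set T -> \bar R}).

Lemma ae_eq_integrable (f g : T -> \bar R) : measurable_fun setT f ->
  ae_eq mu setT f g -> mu.-integrable setT g -> mu.-integrable setT f.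
Proof.
move=> mf fg /[dup] ig /integrableP[_ ig_fin]; apply/integrableP; split => //.
rewrite (ae_eq_integral (fun x => `|g x|)) //.
- exact: measurableT_comp.
- exact/measurableT_comp/(measurable_int _ ig).
- exact: ae_eq_abse.
Qed.

Lemma EFin_indicM_patch (A : set T) (g : T -> R) :
  (fun x => (\1_A x * g x)%:E) = (EFin \o g) \_ A.
Proof.
by apply/funext => x; rewrite patchE indicE; case: (x \in A); rewrite ?mul1r ?mul0r.
Qed.

Lemma integrable_indicM (A : set T) (g : T -> R) : measurable A ->
  mu.-integrable setT (EFin \o g) ->
  mu.-integrable setT (fun x => (\1_A x * g x)%:E).
Proof.
move=> mA ig; rewrite EFin_indicM_patch -integrable_mkcond //.
exact: integrableS ig.
Qed.

Lemma integral_indicM (A : set T) (g : T -> R) :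
  \int[mu]_x (\1_A x * g x)%:E = \int[mu]_(x in A) (g x)%:E.
Proof. by rewrite EFin_indicM_patch -integral_mkcond. Qed.

Lemma integral_sandwich (f : T -> R) (c : R) (H K : T -> \bar R) :
  mu.-integrable setT H -> mu.-integrable setT K ->
  (forall x, (f x)%:E <= H x) -> (forall x, (- f x)%:E <= K x) ->
  \int[mu]_x H x <= c%:E -> \int[mu]_x K x <= (- c)%:E ->
  ae_eq mu setT H (EFin \o f) /\ \int[mu]_x H x = c%:E.
Proof.
move=> iH iK fH fK Hc Kc.
have HK_ge0 x : 0 <= H x + K x.
  by have := leeD (fH x) (fK x); rewrite -EFinD subrr.
have iHK : mu.-integrable setT (fun x => H x + K x) by exact: integrableD.
have intHK : \int[mu]_x (H x + K x) = \int[mu]_x H x + \int[mu]_x K x.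
  exact: integralD.
have HK0 : \int[mu]_x (H x + K x) = 0.
  apply/eqP; rewrite eq_le integral_ge0 ?andbT // intHK.
  by apply: le_trans (leeD Hc Kc) _; rewrite -EFinD subrr.
split.
  have /ae_eq_integral_abs ae0 : \int[mu]_x `|H x + K x| = 0.
    by rewrite -HK0; apply: eq_integral => x _; rewrite gee0_abs.
  have {ae0} := ae0 measurableT (measurable_int _ iHK).
  apply: filterS => x /[apply] /=; move: (fH x) (fK x).
  case: (H x) => [h| |]; case: (K x) => [k| |] //=; rewrite ?lee_fin => fh fk.
  by move/eqP; rewrite -EFinD eqe => /eqP hk; congr EFin; lra.
move: HK0 Hc Kc; rewrite intHK.
rewrite -(fineK (integrable_fin_num measurableT iH)).
rewrite -(fineK (integrable_fin_num measurableT iK)).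
by rewrite -EFinD !lee_fin => /eqP; rewrite eqe => /eqP ? ? ?; congr EFin; lra.
Qed.

Section einfs.
Variable hs : nat -> T -> \bar R.
Hypothesis hs_int : forall n, mu.-integrable setT (hs n).
Let hinf x := einfs (hs ^~ x) 0%N.

Lemma integrable_einfs (g : T -> \bar R) : mu.-integrable setT g ->
  (forall n x, g x <= hs n x) -> mu.-integrable setT hinf.
Proof.
move=> ig g_le.
apply: (le_integrable measurableT _ _ (integrableD measurableT (integrable_abse ig)
  (integrable_abse (hs_int 0%N)))).
  by apply: measurable_fun_einfs => n; exact: measurable_int (hs_int n).
move=> x _ /=; rewrite [leRHS]gee0_abs ?adde_ge0 //; apply: abse_le_between.
  by apply/ereal_infP => _ [n _ <-]; exact: g_le.
by apply: ereal_inf_lbound; exists 0%N.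
Qed.

Lemma integral_einfs_le (c : \bar R) : mu.-integrable setT hinf ->
  (forall n, \int[mu]_x hs n x <= c + (n.+1%:R^-1)%:E) ->
  \int[mu]_x hinf x <= c.
Proof.
move=> iinf hs_le; apply: lee_addinvS => n; apply: le_trans (hs_le n).
by apply: le_integral => // x _; apply: ereal_inf_lbound; exists n.
Qed.

End einfs.

End integration.

Section completion.
Context d (U : measurableType d) (R : realType) (mu : {measure set U -> \bar R}).
Local Notation I := (caratheodory_type (mu^*)%mu).
Local Notation mub := (completed_measure_extension (mu:=mu)).

Lemma measurable_fun_completion (h : U -> \bar R) : measurable_fun setT h ->
  measurable_fun [set: I] (h : I -> \bar R).
Proof.
move=> mh; apply: (measurableT_comp mh) => _ B mB.
by rewrite setTI; exact: caratheodory_measurable_mu_ext.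
Qed.

Lemma ge0_integral_completion (h : U -> \bar R) : measurable_fun setT h ->
  (forall x, 0 <= h x) -> \int[mub]_x (h : I -> \bar R) x = \int[mu]_x h x.
Proof.
move=> mh h0; pose id_IU (x : I) : U := x.
have mid : measurable_fun [set: I] id_IU.
  by move=> _ B mB; rewrite setTI; exact: caratheodory_measurable_mu_ext.
rewrite [RHS](eq_measure_integral (pushforward mub id_IU)).
  by rewrite ge0_integral_pushforward.
by move=> A mA _; rewrite -[RHS]/((mu^*)%mu A) measurable_mu_extE.
Qed.

Lemma integral_completion (h : U -> \bar R) : measurable_fun setT h ->
  \int[mub]_x (h : I -> \bar R) x = \int[mu]_x h x.
Proof.
move=> mh; rewrite [LHS]integralE [RHS]integralE.
by congr (_ - _); apply: ge0_integral_completion;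
  by [exact: measurable_funepos | exact: measurable_funeneg
     | move=> x; exact: funepos_ge0 | move=> x; exact: funeneg_ge0].
Qed.

Lemma ae_eq_completion (f g : U -> \bar R) :
  ae_eq mu setT f g -> ae_eq mub setT (f : I -> \bar R) g.
Proof.
move=> [N [mN N0 fgN]]; exists N; split => //.
  exact: caratheodory_measurable_mu_ext.
by rewrite -[LHS]/((mu^*)%mu N) measurable_mu_extE.
Qed.

Lemma cintegrable_ae_eq (h g : U -> \bar R) : mu.-integrable setT h ->
  ae_eq mu setT h g -> cintegrable mu g /\ cexpect mu g = \int[mu]_x h x.
Proof.
move=> ih /ae_eq_completion hg.
have mhI := measurable_fun_completion (measurable_int _ ih).
have mgI : measurable_fun [set: I] (g : I -> \bar R).
  apply: ae_measurable_fun hg mhI => B.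
  exact: measure_is_complete_caratheodory.
split.
  apply: ae_eq_integrable mgI (ae_eq_sym hg) _; apply/integrableP.
  split => //; rewrite ge0_integral_completion //; first by case/integrableP: ih.
  by apply: measurableT_comp => //; exact: measurable_int ih.
rewrite -integral_completion; last exact: measurable_int ih.
by apply: ae_eq_integral => //; exact: ae_eq_sym.
Qed.

End completion.

Section prefix_sets.
Variables (R : realType) (S : set (nat -> R)) (p : {y | S y}).
Local Notation T := (Traj p).

Lemma filtr_measurable i (A : set T) : filtr p i A -> measurable A.
Proof.
apply: smallest_sub => [|_ [j [B [_ [mB ->]]]]]; first exact: sigma_algebra_measurable.
by apply: sub_sigma_algebra; exists j, B.
Qed.

Lemma prefix_preimageE i (v : seq R) :
  [set x : T | Defs.prefix (sval x) i = v] =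
  if size v == i.+1
  then \bigcap_(k in `I_i.+1) (Defs.coord p k @^-1` [set nth 0%R v k])
  else set0.
Proof.
rewrite /Defs.prefix; apply/seteqP; split => x.
  move=> <-; rewrite size_map size_iota eqxx => k ki.
  change (sval x k = nth 0%R [seq sval x j | j <- iota 0 i.+1] k).
  by rewrite (nth_map 0%N) ?size_iota // nth_iota.
case: ifPn => [/eqP v_size x_v|//]; apply: (@eq_from_nth _ 0%R).
  by rewrite size_map size_iota.
move=> k; rewrite size_map size_iota => ki.
by rewrite (nth_map 0%N) ?size_iota // nth_iota // add0n; exact: x_v.
Qed.

Lemma filtr_prefix i (v : seq R) : filtr p i [set x : T | Defs.prefix (sval x) i = v].
Proof.
pose G := [set A : set T | exists j (B : set R),
  (j <= i)%N /\ measurable B /\ A = Defs.coord p j @^-1` B].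
suff : measurable ([set x : T | Defs.prefix (sval x) i = v]
  : set (g_sigma_algebraType G)) by [].
rewrite prefix_preimageE; case: ifP => _ //.
apply: fin_bigcap_measurable => // k /= ki.
by apply: sub_sigma_algebra; exists k, [set nth 0%R v k].
Qed.

End prefix_sets.

Section endowment.
Variables (R : realType) (S : set (nat -> R)) (p : {y | S y}).
Variable P : nat -> sportfolio R.
Hypothesis P_gen : gen_portfolio p P.

Lemma endowmentE :
  endowment P = (pV (P 0%N))%:E + \sum_(k <oo) (pV (P k.+1))%:E.
Proof.
by rewrite /endowment eseries_recl // => k; rewrite lee_fin (P_gen (ltn0Sn k)).1.
Qed.

Lemma endowment_gtNy : -oo < endowment P.
Proof.
rewrite endowmentE; apply: (@lt_le_trans _ _ (pV (P 0%N))%:E); first exact: ltNyr.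
by rewrite leeDl // nneseries_ge0 // => k _; rewrite lee_fin (P_gen (ltn0Sn k)).1.
Qed.

End endowment.

Section martingale_gains.
Variables (R : realType) (S : set (nat -> R)) (p : {y | S y}).
Local Notation T := (Traj p).
Variable Q : probability T R.
Hypothesis Q_mart : martingale_measure Q.
Variable S' : set T.
Hypotheses (mS' : measurable S') (QS' : Q S' = 1).
Hypothesis S'_finite_nodes : forall j, finite_set [set node j x | x in S'].

Let QS'C : Q (~` S') = 0.
Proof. by rewrite probability_setC // QS' subee. Qed.

Definition increment i (x : T) : R := (Defs.coord p i.+1 x - Defs.coord p i x)%R.

Lemma integrable_increment i : Q.-integrable setT (EFin \o increment i).
Proof.
apply: (@eq_integrable _ _ _ Q setT measurableT
  (fun x => (Defs.coord p i.+1 x)%:E - (Defs.coord p i x)%:E)).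
  by move=> x _; rewrite /= /increment EFinB.
by apply: integrableB => //; [exact: (Q_mart i.+1).1 | exact: (Q_mart i).1].
Qed.

Lemma integral_increment_filtr i (B : set T) : filtr p i B ->
  \int[Q]_(x in S' `&` B) (increment i x)%:E = 0.
Proof.
move=> FB; have mB := filtr_measurable FB.
rewrite setIC -[X in B `&` X]setCK -setDE -negligible_integral //; last 2 first.
- exact: measurableC.
- exact: integrableS (integrable_increment i).
rewrite /increment; under eq_integral do rewrite EFinB.
have [i1 i0] := ((Q_mart i.+1).1, (Q_mart i).1).
rewrite integralB_EFin //; [|exact: integrableS i1|exact: integrableS i0].
rewrite (Q_mart i).2 // subee //.
exact: integrable_fin_num (integrableS _ _ _ i0).
Qed.

Lemma finite_prefixes i : finite_set [set Defs.prefix (sval x) i | x in S'].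
Proof.
apply: (sub_finite_set _ (finite_image
  (fun N : set T => Defs.prefix (sval (xget point N)) i) (S'_finite_nodes i))).
move=> _ [x S'x <-]; exists (node i x); first by exists x.
have /xgetPex x_node : exists y, node i x y by exists x.
by apply/eq_in_map => k; rewrite mem_iota add0n => /andP[_]; exact: x_node.
Qed.

Definition prefixes i : seq (seq R) :=
  undup (projT1 (cid ((finite_seqP _).1 (finite_prefixes i)))).

Lemma prefixesP i x : S' x -> Defs.prefix (sval x) i \in prefixes i.
Proof.
rewrite /prefixes; case: cid => s /= sE S'x; rewrite mem_undup.
by have : [set` s] (Defs.prefix (sval x) i) by rewrite -sE; exists x.
Qed.

Definition gain_on (h : seq R -> R) i (x : T) : R :=
  (\1_S' x * (h (Defs.prefix (sval x) i) * increment i x))%R.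

Let atom i v := S' `&` [set x : T | Defs.prefix (sval x) i = v].

Let gain_onE h i x : gain_on h i x =
  (\sum_(v <- prefixes i) h v * (\1_(atom i v) x * increment i x))%R.
Proof.
rewrite /gain_on; have [S'x|S'Nx] := pselect (S' x); last first.
  rewrite indicE memNset // mul0r big1 // => v _.
  by rewrite indicE memNset ?mul0r ?mulr0 //; case.
rewrite indicE mem_set // mul1r (bigD1_seq (Defs.prefix (sval x) i)) /=;
  [|exact: prefixesP|exact: undup_uniq].
rewrite big1 ?addr0 => [|v v_neq]; first by rewrite indicE mem_set ?mul1r.
by rewrite indicE memNset ?mul0r ?mulr0 // => -[_ /= xv]; rewrite xv eqxx in v_neq.
Qed.

Let measurable_atom i v : measurable (atom i v).
Proof. by apply: measurableI => //; apply: filtr_measurable; exact: filtr_prefix. Qed.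

Let integrable_atom_term (h : seq R -> R) i v :
  Q.-integrable setT (fun x => (h v * (\1_(atom i v) x * increment i x))%:E).
Proof.
under eq_fun do rewrite EFinM.
apply: integrableZl => //; apply: integrable_indicM => //.
exact: integrable_increment.
Qed.

Lemma integrable_gain_on h i : Q.-integrable setT (fun x => (gain_on h i x)%:E).
Proof.
under eq_fun do rewrite gain_onE -sumEFin.
by apply: integrable_sum => // v _; exact: integrable_atom_term.
Qed.

Lemma integral_gain_on h i : \int[Q]_x (gain_on h i x)%:E = 0.
Proof.
under eq_integral do rewrite gain_onE -sumEFin.
rewrite integral_sum // big1 // => v _; under eq_integral do rewrite EFinM.
rewrite integralZl ?integral_indicM ?integral_increment_filtr ?mule0 //.
- exact: filtr_prefix.
- by apply: integrable_indicM => //; exact: integrable_increment.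
Qed.

Definition wealth_on (P : sportfolio R) (x : T) : R :=
  (\1_S' x * wealth_inf P (sval x))%R.

Lemma EFin_wealth_onE P : (fun x => (wealth_on P x)%:E) =
  (fun x => (pV P)%:E * (\1_S' x)%:E + \sum_(0 <= i < pn P) (gain_on (ph P i) i x)%:E).
Proof.
apply/funext => x; rewrite /wealth_on /wealth_inf /wealth minnn mulrDr mulrC.
by rewrite mulr_sumr EFinD EFinM sumEFin.
Qed.

Lemma integrable_wealth_on P :
  Q.-integrable setT (fun x => (wealth_on P x)%:E).
Proof.
rewrite EFin_wealth_onE; apply: integrableD => //.
  exact/integrableZl/integrable_indic.
by apply: integrable_sum => // i _; exact: integrable_gain_on.
Qed.

Lemma integral_wealth_on P : \int[Q]_x (wealth_on P x)%:E = (pV P)%:E.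
Proof.
rewrite EFin_wealth_onE integralD //; last 2 first.
- exact/integrableZl/integrable_indic.
- by apply: integrable_sum => // i _; exact: integrable_gain_on.
rewrite integralZl ?integral_indic ?setIT //; last exact: integrable_indic.
rewrite integral_sum //; last by move=> i; exact: integrable_gain_on.
rewrite big1 ?adde0 => [|i _]; last exact: integral_gain_on.
by rewrite -[RHS]mule1; congr (_ * _); exact: QS'.
Qed.

Section superhedge.
Variable P : nat -> sportfolio R.
Hypotheses (P_gen : gen_portfolio p P) (P_fin : endowment P \is a fin_num).

Let wealth_on_ge0 k x : 0 <= (wealth_on (P k.+1) x)%:E.
Proof. by rewrite lee_fin mulr_ge0 // (P_gen (ltn0Sn k)).2. Qed.

Let tail x := \sum_(k <oo) (wealth_on (P k.+1) x)%:E.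

Let measurable_tail : measurable_fun setT tail.
Proof.
apply: ge0_emeasurable_sum => [k x _ _|k _]; first exact: wealth_on_ge0.
exact: measurable_int (integrable_wealth_on _).
Qed.

Let integral_tail : \int[Q]_x tail x = \sum_(k <oo) (pV (P k.+1))%:E.
Proof.
rewrite integral_nneseries //.
- by apply: eq_eseriesr => k _; rewrite integral_wealth_on.
- by move=> k; exact: measurable_int (integrable_wealth_on _).
Qed.

Let integrable_tail : Q.-integrable setT tail.
Proof.
apply/integrableP; split => //.
under eq_integral do rewrite gee0_abs ?nneseries_ge0 //.
rewrite integral_tail ltey_eq.
by move: P_fin; rewrite (endowmentE P_gen) fin_numD => /andP[_ ->].
Qed.

Definition total_wealth_on x := \sum_(m <oo) (wealth_on (P m) x)%:E.

Let total_wealth_onE : total_wealth_on = fun x => (wealth_on (P 0) x)%:E + tail x.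
Proof. by apply/funext => x; rewrite /total_wealth_on eseries_recl. Qed.

Definition hedge x := if x \in S' then total_wealth_on x else +oo.

Lemma hedge_superhedges x :
  \sum_(m <oo) (wealth_inf (P m) (sval x))%:E <= hedge x.
Proof.
rewrite /hedge; case: ifPn => [/set_mem S'x|_]; last exact: leey.
rewrite le_eqVlt; apply/orP; left; apply/eqP/eq_eseriesr => m _.
by rewrite /wealth_on indicE mem_set ?mul1r.
Qed.

Let hedge_ae : ae_eq Q setT hedge total_wealth_on.
Proof.
exists (~` S'); split; [exact: measurableC|exact: QS'C|].
by move=> x /= hx S'x; apply: hx => _; rewrite /hedge mem_set.
Qed.

Let integrable_total_wealth_on : Q.-integrable setT total_wealth_on.
Proof.
by rewrite total_wealth_onE; apply: integrableD => //; exact: integrable_wealth_on.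
Qed.

Lemma integrable_hedge : Q.-integrable setT hedge.
Proof.
apply: ae_eq_integrable hedge_ae integrable_total_wealth_on.
apply: measurable_fun_ifT => //; last exact: measurable_int integrable_total_wealth_on.
apply: (measurable_fun_bool true); rewrite setTI.
rewrite (_ : _ @^-1` _ = S') //.
by apply/seteqP; split => x /=; [move/set_mem | move/mem_set].
Qed.

Lemma integral_hedge : \int[Q]_x hedge x = endowment P.
Proof.
rewrite (ae_eq_integral total_wealth_on) //; last 2 first.
- exact: measurable_int integrable_hedge.
- exact: measurable_int integrable_total_wealth_on.
rewrite total_wealth_onE integralD //; last exact: integrable_wealth_on.
by rewrite integral_wealth_on integral_tail (endowmentE P_gen).
Qed.

End superhedge.

End martingale_gains.

Section superhedging_bounds.
Variables (R : realType) (S : set (nat -> R)) (p : {y | S y}).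
Local Notation T := (Traj p).

Lemma M0_integrable_superhedge (Q : probability T R) P :
  M0 p Q -> gen_portfolio p P -> endowment P \is a fin_num ->
  exists h : T -> \bar R, [/\ Q.-integrable setT h,
    forall x, \sum_(m <oo) (wealth_inf (P m) (sval x))%:E <= h x &
    \int[Q]_x h x = endowment P].
Proof.
move=> [Q_mart [S' [mS' [QS' S'_fin]]]] P_gen P_fin.
exists (hedge S' P); split.
- exact: integrable_hedge.
- exact: hedge_superhedges.
- exact: integral_hedge.
Qed.

Lemma EQstar_le_endowment Q P (f : T -> \bar R) : M0 p Q ->
  gen_portfolio p P -> superhedges P f -> EQstar Q f <= endowment P.
Proof.
move=> QM0 P_gen Pf; have [P_fin|] := boolP (endowment P \is a fin_num); last first.
  by rewrite fin_numElt (endowment_gtNy P_gen) /= -leNgt leye_eq => /eqP ->; exact: leey.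
have [h [ih h_super h_int]] := M0_integrable_superhedge QM0 P_gen P_fin.
have [cih cEh] := cintegrable_ae_eq ih (ae_eq_refl Q setT h).
apply: (@le_trans _ _ (EQ Q h)); last by rewrite /EQ cEh h_int.
apply: ereal_inf_lbound; exists h => //; split; [|split].
- exact: measurable_fun_completion (measurable_int _ ih).
- by move=> x; exact: le_trans (Pf x) (h_super x).
- move=> [+ _]; have := integrable_fin_num measurableT (integrable_funepos measurableT cih).
  by rewrite fin_numE => /andP[_ /eqP].
Qed.

Lemma sup_EQstar_le_sigmabar (f : T -> \bar R) :
  ereal_sup [set EQstar Q f | Q in M0 p] <= sigmabar p f.
Proof.
apply/ereal_supP => _ [Q QM0 <-]; apply/ereal_infP => _ [P [P_gen [Pf ->]]].
exact: EQstar_le_endowment.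
Qed.

Lemma sigmabar_le_knorm (f : T -> \bar R) : sigmabar p f <= knorm p f.
Proof.
apply: le_ereal_inf => _ [P [[P_gen _] [Pf ->]]]; exists P; split => //; split => // x.
exact: le_trans (lee_abs _) (Pf x).
Qed.

Lemma sigmabar0_ge0 : M0 p !=set0 -> 0 <= sigmabar p (fun _ => 0).
Proof.
move=> [Q QM0]; apply: le_trans (sup_EQstar_le_sigmabar _).
apply: ereal_sup_ge; exists (EQstar Q (fun _ => 0)); first by exists Q.
apply/ereal_infP => _ [h [_ [h_ge0 _]] <-].
by apply: integral_ge0 => x _; exact: h_ge0.
Qed.

Lemma sigmabar_approx Q (f : T -> R) : M0 p Q ->
  sigmabar p (fun x => (f x)%:E) \is a fin_num -> forall n,
  exists h : T -> \bar R, [/\ Q.-integrable setT h, forall x, (f x)%:E <= h x &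
    \int[Q]_x h x <= sigmabar p (fun x => (f x)%:E) + (n.+1%:R^-1)%:E].
Proof.
move=> QM0 f_fin n; have n_gt0 : (0 < n.+1%:R^-1 :> R)%R by rewrite invr_gt0.
have [_ [P [P_gen [Pf ->]]] P_lt] := lb_ereal_inf_adherent n_gt0 f_fin.
have P_fin : endowment P \is a fin_num.
  by rewrite fin_numElt (endowment_gtNy P_gen) (lt_trans P_lt) // ltey_eq fin_numD f_fin.
have [h [ih h_super h_int]] := M0_integrable_superhedge QM0 P_gen P_fin.
exists h; split => // [x|]; first exact: le_trans (Pf x) (h_super x).
by rewrite h_int ltW.
Qed.

Lemma sigmabar_majorant Q (f : T -> R) (c : R) (k : T -> \bar R) : M0 p Q ->
  sigmabar p (fun x => (f x)%:E) = c%:E ->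
  Q.-integrable setT k -> (forall x, (- f x)%:E <= k x) ->
  exists H : T -> \bar R, [/\ Q.-integrable setT H, forall x, (f x)%:E <= H x &
    \int[Q]_x H x <= c%:E].
Proof.
move=> QM0 fE ik fk; have f_fin : sigmabar p (fun x => (f x)%:E) \is a fin_num.
  by rewrite fE.
have [hs hsP] := choice (sigmabar_approx QM0 f_fin).
have ihs n : Q.-integrable setT (hs n) by case: (hsP n).
have k_le n x : - k x <= hs n x.
  by case: (hsP n) => _ /(_ x) fh _; apply: le_trans fh; rewrite leeNl -EFinN.
have iH := integrable_einfs ihs (integrableN ik) k_le.
exists (fun x => einfs (hs ^~ x) 0%N); split => //.
  by move=> x; apply/ereal_infP => _ [n _ <-]; case: (hsP n).
by apply: integral_einfs_le => // n; rewrite -fE; case: (hsP n).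
Qed.

Lemma L1K_L1Q_intK Q (f : T -> R) : M0 p Q -> L1K p f ->
  L1Q Q f /\ intK p f = EQ Q (fun x => (f x)%:E).
Proof.
move=> QM0 [Nf_E f_fin].
have [c cE] : exists c : R, sigmabar p (fun x => (f x)%:E) = c%:E.
  by exists (fine (sigmabar p (fun x => (f x)%:E))); rewrite fineK.
have NcE : sigmabar p (fun x => (- f x)%:E) = (- c)%:E.
  by rewrite EFinN -cE -Nf_E oppeK.
have Nf_fin : sigmabar p (fun x => (- f x)%:E) \is a fin_num by rewrite NcE.
have [k [ik fk _]] := sigmabar_approx QM0 Nf_fin 0.
have [H [iH fH Hc]] := sigmabar_majorant QM0 cE ik fk.
have NfH x : (- (- f x))%:E <= H x by rewrite opprK.
have [K [iK fK Kc]] := sigmabar_majorant QM0 NcE iH NfH.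
have [Hf HE] := integral_sandwich iH iK fH fK Hc Kc.
have [f_int fE] := cintegrable_ae_eq iH Hf.
by split => //; rewrite /intK cE /EQ fE HE.
Qed.

End superhedging_bounds.

Theorem theorem6p2 (R : realType) (s0 : R) (S : set (nat -> R))
  (HS : forall x, S x -> x 0%N = s0) (p : {y | S y}) :
  M0 p !=set0 ->
  0 <= sigmabar p (fun _ => 0) /\
  (forall f : Traj p -> \bar R,
     ereal_sup [set EQstar Q f | Q in M0 p] <= sigmabar p f /\
     sigmabar p f <= knorm p f) /\
  (forall Q, M0 p Q ->
     L1K p `<=` L1Q Q /\
     (forall f, L1K p f -> intK p f = EQ Q (fun x => (f x)%:E))).
Proof.
move=> M0_neq0; split; first exact: sigmabar0_ge0.
split=> [f|Q QM0]; first by split; [exact: sup_EQstar_le_sigmabar | exact: sigmabar_le_knorm].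
by split=> f /(L1K_L1Q_intK QM0) [].
Qed.
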